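(* For every $c_*\in(0,1/8]$ there exist constants $C,c,c'>0$ (depending only on $c_*$, $s$ and the $\lambda_i$) such that the following holds. Let $\varepsilon,\delta\in(0,1]$, $\nu>0$, $R\geq1$, frequencies $\mathbf{z}_1,\dots,\mathbf{z}_R\in\mathbb{Z}_M\times\mathbb{Z}_{M^2}$ with phases $\phi_1,\dots,\phi_R$, assume $N\geq(2/(\varepsilon\delta))^{CR^3}$, and let $(q,U,V,(r_n),P,(Q_n))$ be a linearization system with parameter $c_*$ for $(\varepsilon,\delta,\phi_1,\dots,\phi_R)$, with associated smoothing $h\mapsto\widetilde h$. Let $A\subseteq[N]$ have density $\delta=|A|/N$ and suppose $$\Big\|\frac{\widetilde{f_A}}{\delta}\Big\|_{L^2(N)}^2\geq\nu.$$ If $\varepsilon\leq c\,\nu\delta$, then there exists an arithmetic progression $Q\subseteq[N]$ such that $$\frac{|A\cap Q|}{|Q|}\geq(1+\nu/2)\,\delta,\qquad |Q|\geq N^{c'/R^3}.$$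
   Context: $[N]=\{1,\dots,N\}$, $\|x\|$ is the distance from $x$ to the nearest integer. $M$ is a prime with $Y\leq M\leq 2Y$, $Y=2(|\lambda_1|+\dots+|\lambda_s|)N$, for fixed nonzero integers $\lambda_1,\dots,\lambda_s$. For $\mathbf{z}_i=(x_i,y_i)$, $\phi_i(n)=\frac{x_i}{M}n+\frac{y_i}{M^2}n^2$. $f_A=1_A-\delta1_{[N]}$ and $\|g\|_{L^2(N)}=\big(\frac1N\sum_{n=1}^N|g(n)|^2\big)^{1/2}$. An arithmetic progression is a set $\{u+dj:j\in[L]\}$ with integers $u$, $d\geq1$, $L\geq1$. A linearization system with parameter $c_*$ for $(\varepsilon,\delta,\phi_1,\dots,\phi_R)$ consists of integers $q\geq1$, $U,V\geq1$, $r_n\geq1$ ($n\in\mathbb{Z}$) with $N^{c_*/R^2}\leq U\leq 2N^{c_*/R^2}$, $U^{c_*/R}\leq V\leq 2U^{c_*/R}$, $q\leq N^{1/4}$, $r_n\leq U^{1/4}$, together with $P=\{q,2q,\dots,Uq\}$ and $Q_n=\{qr_n,2qr_n,\dots,Vqr_n\}$, such that $\|\phi_i(n+m+k)-\phi_i(n+m)\|\leq\varepsilon\delta$ for all $n\in[N]$, $m\in P$, $k\in Q_n$, $i\in[R]$. The associated smoothing of $h:\mathbb{Z}\to\mathbb{C}$ supported in $[N]$ is $\widetilde h:[N]\to\mathbb{C}$, $\widetilde h(n)=\frac{1}{|P|}\sum_{m\in P}\frac{1}{|Q_{n-m}|}\sum_{k\in Q_{n-m}}h(n+k)$. *)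

From Stdlib Require Import Reals ZArith Znumtheory List.
Open Scope R_scope.

Fixpoint rsum (n : nat) (f : nat -> R) : R :=
  match n with
  | O => 0
  | S k => rsum k f + f (S k)
  end.

(* floor x = up x - 1, since x < up x <= x + 1 *)
Definition floorR (x : R) : Z := (up x - 1)%Z.

Definition dist_nint (x : R) : R :=
  Rmin (x - IZR (floorR x)) (IZR (floorR x) + 1 - x).

Definition indR (b : bool) : R := if b then 1 else 0.

Definition inN (N : nat) (n : Z) : bool :=
  ((1 <=? n)%Z && (n <=? Z.of_nat N)%Z)%bool.

Definition phase (M x y : Z) (n : Z) : R :=
  IZR x / IZR M * IZR n + IZR y / (IZR M ^ 2) * IZR n ^ 2.

Definition cardA (A : Z -> bool) (N : nat) : R :=
  rsum N (fun j => indR (A (Z.of_nat j))).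

(* f_A = 1_A - delta 1_[N], supported in [N] *)
Definition balanced (A : Z -> bool) (N : nat) (delta : R) (n : Z) : R :=
  if inN N n then indR (A n) - delta else 0.

(* Linearization system with parameter cstar for (eps, delta, phi_1..phi_R).
   P = {q, 2q, ..., Uq}, Q_n = {q r_n, 2 q r_n, ..., V q r_n}. *)
Definition linearization_system (cstar eps delta : R) (Rn : nat) (N : nat)
    (phi : nat -> Z -> R) (q U V : nat) (r : Z -> nat) : Prop :=
  (1 <= q)%nat /\ (1 <= U)%nat /\ (1 <= V)%nat /\
  (forall n : Z, (1 <= r n)%nat) /\
  Rpower (INR N) (cstar / INR Rn ^ 2) <= INR U /\
  INR U <= 2 * Rpower (INR N) (cstar / INR Rn ^ 2) /\
  Rpower (INR U) (cstar / INR Rn) <= INR V /\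
  INR V <= 2 * Rpower (INR U) (cstar / INR Rn) /\
  INR q <= Rpower (INR N) (1 / 4) /\
  (forall n : Z, INR (r n) <= Rpower (INR U) (1 / 4)) /\
  (forall (n : Z) (jm jk i : nat),
      (1 <= n <= Z.of_nat N)%Z ->
      (1 <= jm <= U)%nat -> (1 <= jk <= V)%nat -> (1 <= i <= Rn)%nat ->
      let m := Z.of_nat (q * jm) in
      let k := Z.of_nat (q * r n * jk) in
      dist_nint (phi i (n + m + k)%Z - phi i (n + m)%Z) <= eps * delta).

Definition smoothing (q U V : nat) (r : Z -> nat) (h : Z -> R) (n : Z) : R :=
  (1 / INR U) * rsum U (fun jm =>
     let m := Z.of_nat (q * jm) in
     (1 / INR V) * rsum V (fun jk =>
        h (n + Z.of_nat (q * r (n - m)%Z * jk))%Z)).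

Definition L2norm (N : nat) (g : Z -> R) : R :=
  sqrt ((1 / INR N) * rsum N (fun j => Rabs (g (Z.of_nat j)) ^ 2)).

Definition sum_absZ (lam : list Z) : Z :=
  fold_right (fun a acc => (Z.abs a + acc)%Z) 0%Z lam.

From Stdlib Require Import Reals ZArith Znumtheory List Lra Lia Classical.
Open Scope R_scope.

(* The function f_A has mean zero on [N], and so does its
   smoothing up to two errors: the boundary of [N] (of relative size qU/N) and the
   dependence of the step q r_{n-m} on n (of relative size r_n V / U).  The size constraints
   on U, V, q, r_n and N make both at most nu delta^2 / 8.  Since the smoothing is at
   least -delta and its mean square is at least nu delta^2, it exceeds nu delta / 2 at
   some n.  There it is an average of f_A along the progressions n + Q_{n-m}; one of
   them, cut off where it leaves [N], has density at least (1 + nu/2) delta and length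
   at least V nu delta / 2 >= N^{c_*^2 / (2 R^3)}. *)

Lemma rsum_ext n f g : (forall j, (1 <= j <= n)%nat -> f j = g j) -> rsum n f = rsum n g.
Proof.
  induction n as [|n IH]; intros H; simpl; auto.
  rewrite IH by (intros; apply H; lia). rewrite H by lia. reflexivity.
Qed.

Lemma rsum_plus n f g : rsum n (fun j => f j + g j) = rsum n f + rsum n g.
Proof. induction n; simpl; [lra|]. rewrite IHn; lra. Qed.

Lemma rsum_minus n f g : rsum n (fun j => f j - g j) = rsum n f - rsum n g.
Proof. induction n; simpl; [lra|]. rewrite IHn; lra. Qed.

Lemma rsum_scal n c f : rsum n (fun j => c * f j) = c * rsum n f.
Proof. induction n; simpl; [lra|]. rewrite IHn; lra. Qed.

Lemma rsum_const n c : rsum n (fun _ => c) = INR n * c.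
Proof. induction n; simpl rsum; [simpl; lra|]. rewrite IHn, S_INR; lra. Qed.

Lemma rsum_le n f g : (forall j, (1 <= j <= n)%nat -> f j <= g j) -> rsum n f <= rsum n g.
Proof.
  induction n as [|n IH]; intros H; simpl; [lra|].
  assert (rsum n f <= rsum n g) by (apply IH; intros; apply H; lia).
  assert (f (S n) <= g (S n)) by (apply H; lia). lra.
Qed.

Lemma rsum_bounds n h lo hi : (forall j, (1 <= j <= n)%nat -> lo <= h j <= hi) ->
  INR n * lo <= rsum n h <= INR n * hi.
Proof.
  intros H. rewrite <- !rsum_const. split; apply rsum_le; intros j Hj; apply H, Hj.
Qed.

Lemma rsum_abs_le n f B : (forall j, (1 <= j <= n)%nat -> Rabs (f j) <= B) ->
  Rabs (rsum n f) <= INR n * B.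
Proof.
  induction n as [|n IH]; intros H; simpl rsum.
  - simpl. rewrite Rabs_R0. lra.
  - rewrite S_INR. eapply Rle_trans; [apply Rabs_triang|].
    assert (Rabs (rsum n f) <= INR n * B) by (apply IH; intros; apply H; lia).
    assert (Rabs (f (S n)) <= B) by (apply H; lia). lra.
Qed.

Lemma rsum_comm n m (F : nat -> nat -> R) :
  rsum n (fun i => rsum m (fun j => F i j)) = rsum m (fun j => rsum n (fun i => F i j)).
Proof.
  induction n as [|n IH]; simpl.
  - rewrite rsum_const. lra.
  - rewrite IH, <- rsum_plus. reflexivity.
Qed.

Lemma rsum_add_range n k f : rsum (n + k) f = rsum n f + rsum k (fun j => f (n + j)%nat).
Proof.
  induction k as [|k IH]; simpl.
  - rewrite Nat.add_0_r; lra.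
  - rewrite Nat.add_succ_r. simpl. rewrite IH. lra.
Qed.

Lemma rsum_ge_exists n f t : (1 <= n)%nat -> INR n * t <= rsum n f ->
  exists j, (1 <= j <= n)%nat /\ t <= f j.
Proof.
  intros Hn Hsum. apply NNPP. intros Hnone.
  assert (Hlt : forall j, (1 <= j <= n)%nat -> f j < t).
  { intros j Hj. apply Rnot_le_lt. intros Hle. apply Hnone. eauto. }
  clear Hnone. destruct n as [|n]; [lia|]. clear Hn.
  enough (rsum (S n) f < INR (S n) * t) by lra. clear Hsum.
  induction n as [|n IH]; simpl rsum.
  - assert (f 1%nat < t) by (apply Hlt; lia). simpl. lra.
  - rewrite (S_INR (S n)).
    assert (f (S (S n)) < t) by (apply Hlt; lia).
    assert (IHn : rsum (S n) f < INR (S n) * t) by (apply IH; intros; apply Hlt; lia).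
    simpl rsum in IHn. lra.
Qed.

Definition zsum (a : Z) (n : nat) (h : Z -> R) : R := rsum n (fun j => h (a + Z.of_nat j)%Z).

Lemma zsum_split a n k h : zsum a (n + k) h = zsum a n h + zsum (a + Z.of_nat n) k h.
Proof.
  unfold zsum. rewrite rsum_add_range. f_equal. apply rsum_ext. intros j _. f_equal. lia.
Qed.

Lemma zsum_minus a n f g : zsum a n f - zsum a n g = zsum a n (fun l => f l - g l).
Proof. unfold zsum. rewrite rsum_minus. reflexivity. Qed.

Lemma zsum_abs_le a n f B : (forall l, Rabs (f l) <= B) -> Rabs (zsum a n f) <= INR n * B.
Proof. intros H. apply rsum_abs_le. auto. Qed.

Lemma zsum_eq0 a n h : (forall j, (1 <= j <= n)%nat -> h (a + Z.of_nat j)%Z = 0) -> zsum a n h = 0.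
Proof.
  intros H. unfold zsum. rewrite (rsum_ext _ _ (fun _ => 0)) by auto. rewrite rsum_const. lra.
Qed.

Lemma zsum_supported a n N h :
  (forall z, (z < 1 \/ Z.of_nat N < z)%Z -> h z = 0) ->
  (a <= 0)%Z -> (Z.of_nat N <= a + Z.of_nat n)%Z ->
  zsum a n h = zsum 0 N h.
Proof.
  intros Hs Ha Hn.
  set (p := Z.to_nat (- a)).
  replace n with (p + (N + (n - p - N)))%nat by lia.
  rewrite zsum_split, zsum_split.
  rewrite zsum_eq0 by (intros j Hj; apply Hs; lia).
  rewrite (zsum_eq0 (a + Z.of_nat p + Z.of_nat N)) by (intros j Hj; apply Hs; lia).
  replace (a + Z.of_nat p)%Z with 0%Z by lia. lra.
Qed.

Lemma zsum_subwindow a k n l h B : (forall z, Rabs (h z) <= B) ->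
  Rabs (zsum (a + Z.of_nat k) n h - zsum a (k + n + l) h) <= INR (k + l) * B.
Proof.
  intros Hh. rewrite !zsum_split, plus_INR.
  assert (Hk := zsum_abs_le a k h B Hh).
  assert (Hl := zsum_abs_le (a + Z.of_nat (k + n)) l h B Hh).
  replace (a + Z.of_nat k + Z.of_nat n)%Z with (a + Z.of_nat (k + n))%Z by lia.
  replace (zsum (a + Z.of_nat k) n h -
           (zsum a k h + zsum (a + Z.of_nat k) n h + zsum (a + Z.of_nat (k + n)) l h))
    with (- (zsum a k h + zsum (a + Z.of_nat (k + n)) l h)) by ring.
  rewrite Rabs_Ropp. eapply Rle_trans; [apply Rabs_triang|]. lra.
Qed.

Lemma zsum_shift h s n B : (forall z, Rabs (h z) <= B) ->
  Rabs (zsum (Z.of_nat s) n h - zsum 0 n h) <= 2 * INR s * B.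
Proof.
  intros Hh.
  assert (H1 := zsum_subwindow 0 s n 0 h B Hh).
  assert (H2 := zsum_subwindow 0 0 n s h B Hh).
  replace (0 + Z.of_nat s)%Z with (Z.of_nat s) in H1 by lia.
  replace (0 + Z.of_nat 0)%Z with 0%Z in H2 by lia.
  replace (0 + n + s)%nat with (s + n + 0)%nat in H2 by lia.
  rewrite !Nat.add_0_r in H1. rewrite Nat.add_0_r, Nat.add_0_l in H2.
  replace (zsum (Z.of_nat s) n h - zsum 0 n h)
    with ((zsum (Z.of_nat s) n h - zsum 0 (s + n) h) - (zsum 0 n h - zsum 0 (s + n) h)) by ring.
  eapply Rle_trans; [apply Rabs_triang|]. rewrite Rabs_Ropp. lra.
Qed.

Lemma smoothing_eq q U V r h n :
  smoothing q U V r h n = / INR U * / INR V *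
    rsum U (fun jm => rsum V (fun jk => h (n + Z.of_nat (q * r (n - Z.of_nat (q * jm))%Z * jk))%Z)).
Proof. unfold smoothing. cbv zeta. rewrite rsum_scal. unfold Rdiv. lra. Qed.

Lemma smoothing_bounds q U V r h lo hi n : (1 <= U)%nat -> (1 <= V)%nat ->
  (forall z, lo <= h z <= hi) -> lo <= smoothing q U V r h n <= hi.
Proof.
  intros HU HV Hh. rewrite smoothing_eq.
  assert (HU0 : 0 < INR U) by (apply lt_0_INR; lia).
  assert (HV0 : 0 < INR V) by (apply lt_0_INR; lia).
  match goal with |- context [rsum U ?F] => set (S := rsum U F) end.
  assert (HS : INR U * (INR V * lo) <= S <= INR U * (INR V * hi)).
  { apply rsum_bounds. intros jm _. apply rsum_bounds. intros; apply Hh. }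
  replace (/ INR U * / INR V * S) with (S / (INR U * INR V)) by (field; lra).
  assert (HUV : 0 < INR U * INR V) by nra.
  split; apply Rmult_le_reg_r with (INR U * INR V); auto;
    unfold Rdiv; rewrite Rmult_assoc, Rinv_l by lra; lra.
Qed.

Lemma smoothing_ge_exists q U V r h n t : (1 <= U)%nat -> (1 <= V)%nat ->
  t <= smoothing q U V r h n ->
  exists jm, (1 <= jm <= U)%nat /\
    INR V * t <= rsum V (fun jk => h (n + Z.of_nat (q * r (n - Z.of_nat (q * jm))%Z * jk))%Z).
Proof.
  intros HU HV Ht. rewrite smoothing_eq in Ht.
  assert (HU0 : 0 < INR U) by (apply lt_0_INR; lia).
  assert (HV0 : 0 < INR V) by (apply lt_0_INR; lia).
  apply rsum_ge_exists; [exact HU|].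
  apply Rmult_le_compat_l with (r := INR U * INR V) in Ht; [|nra].
  match type of Ht with _ <= _ * (_ * rsum U ?F) =>
    replace (INR U * INR V * (/ INR U * / INR V * rsum U F)) with (rsum U F) in Ht by (field; lra) end.
  lra.
Qed.

Section SmoothingMean.

Variables (N q U V : nat) (r : Z -> nat) (f : Z -> R) (rho : R).
Hypotheses (HU : (1 <= U)%nat) (HV : (1 <= V)%nat).
Hypothesis f_bounded : forall z, Rabs (f z) <= 1.
Hypothesis f_supported : forall z, (z < 1 \/ Z.of_nat N < z)%Z -> f z = 0.
Hypothesis f_mean0 : zsum 0 N f = 0.
Hypothesis r_le : forall z, INR (r z) <= rho.

(* The inner sum of the smoothing after the substitution [l = n - q jm]: the step
   length [q r_l] now depends on [l] only. *)
Let along jm l := rsum V (fun jk => f (l + Z.of_nat (q * jm) + Z.of_nat (q * r l * jk))%Z).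

Let QU := (q * U)%nat.

Lemma along_abs_le jm l : Rabs (along jm l) <= INR V * 1.
Proof. apply rsum_abs_le. auto. Qed.

Lemma smoothing_sum_reindex :
  rsum N (fun j => smoothing q U V r f (Z.of_nat j)) =
  / INR U * / INR V * rsum U (fun jm => zsum (- Z.of_nat (q * jm)) N (along jm)).
Proof.
  rewrite (rsum_ext _ _ (fun j => / INR U * / INR V *
     rsum U (fun jm => rsum V (fun jk =>
       f (Z.of_nat j + Z.of_nat (q * r (Z.of_nat j - Z.of_nat (q * jm))%Z * jk))%Z))))
    by (intros; apply smoothing_eq).
  rewrite rsum_scal, rsum_comm. f_equal. apply rsum_ext. intros jm _.
  apply rsum_ext. intros j _. unfold along. apply rsum_ext. intros jk _.
  replace (- Z.of_nat (q * jm) + Z.of_nat j)%Z with (Z.of_nat j - Z.of_nat (q * jm))%Z by lia.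
  f_equal. lia.
Qed.

Lemma window_extension_error :
  Rabs (rsum U (fun jm => zsum (- Z.of_nat (q * jm)) N (along jm))
        - rsum U (fun jm => zsum (- Z.of_nat QU) (N + QU) (along jm)))
  <= INR U * (INR QU * INR V).
Proof.
  rewrite <- rsum_minus. apply rsum_abs_le. intros jm Hjm.
  assert (Hm : (q * jm <= QU)%nat) by (apply Nat.mul_le_mono_l; lia).
  assert (Hw := zsum_subwindow (- Z.of_nat QU) (QU - q * jm) N (q * jm) (along jm) _
                  (along_abs_le jm)).
  replace (- Z.of_nat QU + Z.of_nat (QU - q * jm))%Z with (- Z.of_nat (q * jm))%Z in Hw by lia.
  replace (QU - q * jm + N + q * jm)%nat with (N + QU)%nat in Hw by lia.
  replace (QU - q * jm + q * jm)%nat with QU in Hw by lia.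
  lra.
Qed.

Lemma step_variation_error :
  Rabs (rsum U (fun jm => zsum (- Z.of_nat QU) (N + QU) (along jm))
        - zsum (- Z.of_nat QU) (N + QU)
            (fun l => INR V * zsum 0 U (fun t => f (l + Z.of_nat q * t)%Z)))
  <= INR (N + QU) * (INR V * (2 * rho * INR V)).
Proof.
  assert (Halong : rsum U (fun jm => zsum (- Z.of_nat QU) (N + QU) (along jm)) =
    zsum (- Z.of_nat QU) (N + QU)
      (fun l => rsum V (fun jk => zsum (Z.of_nat (r l * jk)) U (fun t => f (l + Z.of_nat q * t)%Z)))).
  { unfold zsum at 1. rewrite rsum_comm. unfold zsum. apply rsum_ext. intros i _.
    unfold along. rewrite rsum_comm. apply rsum_ext. intros jk _. apply rsum_ext. intros jm _.
    f_equal. rewrite !Nat2Z.inj_mul. ring. }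
  rewrite Halong, zsum_minus. apply zsum_abs_le. intros l.
  rewrite <- rsum_const, <- rsum_minus. apply rsum_abs_le. intros jk Hjk.
  eapply Rle_trans; [apply zsum_shift with (B := 1); auto|].
  assert (Hrho : 0 <= rho) by (eapply Rle_trans; [apply pos_INR | apply (r_le l)]).
  rewrite mult_INR, Rmult_1_r.
  assert (INR (r l) * INR jk <= rho * INR V)
    by (apply Rmult_le_compat; auto using pos_INR; apply le_INR; lia).
  lra.
Qed.

(* Without the [l]-dependent shifts, summing over [l] first exhausts the support of [f]
   for every [jm], and [f] has mean zero. *)
Lemma unshifted_sum_eq0 :
  zsum (- Z.of_nat QU) (N + QU) (fun l => INR V * zsum 0 U (fun t => f (l + Z.of_nat q * t)%Z)) = 0.
Proof.
  unfold zsum at 1. rewrite rsum_scal. unfold zsum at 1. rewrite rsum_comm.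
  rewrite (rsum_ext _ _ (fun _ => 0)); [rewrite rsum_const; ring|].
  intros jm Hjm. rewrite <- f_mean0.
  assert (Hm : (Z.of_nat q * Z.of_nat jm <= Z.of_nat QU)%Z)
    by (unfold QU; rewrite Nat2Z.inj_mul; apply Z.mul_le_mono_nonneg_l; lia).
  rewrite <- (zsum_supported (- Z.of_nat QU + Z.of_nat q * Z.of_nat jm) (N + QU)) by (exact f_supported || lia).
  unfold zsum. apply rsum_ext. intros i _. f_equal. ring.
Qed.

Lemma smoothing_sum_le :
  Rabs (rsum N (fun j => smoothing q U V r f (Z.of_nat j))) <=
    INR q * INR U + (INR N + INR q * INR U) * (2 * rho * INR V) / INR U.
Proof.
  assert (HU0 : 0 < INR U) by (apply lt_0_INR; lia).
  assert (HV0 : 0 < INR V) by (apply lt_0_INR; lia).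
  assert (E1 := window_extension_error). assert (E2 := step_variation_error).
  rewrite unshifted_sum_eq0, Rminus_0_r in E2.
  rewrite smoothing_sum_reindex.
  set (T := rsum U (fun jm => zsum (- Z.of_nat (q * jm)) N (along jm))) in *.
  set (T' := rsum U (fun jm => zsum (- Z.of_nat QU) (N + QU) (along jm))) in *.
  assert (HT : Rabs T <= INR U * (INR QU * INR V) + INR (N + QU) * (INR V * (2 * rho * INR V))).
  { replace T with ((T - T') + T') by ring. eapply Rle_trans; [apply Rabs_triang|]. lra. }
  unfold QU in HT. rewrite plus_INR, mult_INR in HT.
  rewrite Rabs_mult, Rabs_mult, Rabs_inv, Rabs_inv, !Rabs_pos_eq by lra.
  apply Rle_trans with (/ INR U * / INR V * (INR U * (INR q * INR U * INR V)
     + (INR N + INR q * INR U) * (INR V * (2 * rho * INR V)))).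
  - apply Rmult_le_compat_l; auto.
    apply Rmult_le_pos; left; apply Rinv_0_lt_compat; auto.
  - right. field. lra.
Qed.

End SmoothingMean.

Lemma Rpower_pos x y : 0 < Rpower x y.
Proof. apply exp_pos. Qed.

Lemma Rpower_ge1 x y : 1 <= x -> 0 <= y -> 1 <= Rpower x y.
Proof. intros Hx Hy. rewrite <- (Rpower_O x) by lra. apply Rle_Rpower; lra. Qed.

Lemma Rpower_nat_mult x y (k : nat) : Rpower x (INR k * y) = Rpower x y ^ k.
Proof. rewrite Rmult_comm, <- Rpower_mult. apply Rpower_pow, Rpower_pos. Qed.

Lemma Rpower_inv_exponent_le x y e : 0 < e -> 0 < y -> Rpower y (/ e) <= x -> y <= Rpower x e.
Proof.
  intros He Hy Hx.
  rewrite <- (Rpower_1 y) at 1 by exact Hy.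
  replace 1 with (/ e * e) by (field; lra). rewrite <- Rpower_mult.
  apply Rle_Rpower_l; [lra|]. split; [apply Rpower_pos | exact Hx].
Qed.

Section ParameterBounds.

Variables (cs Rr NN q U V : R).
Hypotheses (Hcs : 0 < cs <= 1 / 8) (HRr : 1 <= Rr) (HNN : 1 <= NN).
Hypotheses (HU1 : Rpower NN (cs / Rr ^ 2) <= U) (HU2 : U <= 2 * Rpower NN (cs / Rr ^ 2)).
Hypotheses (HV1 : Rpower U (cs / Rr) <= V) (HV2 : V <= 2 * Rpower U (cs / Rr)).
Hypotheses (Hq0 : 0 <= q) (Hq : q <= Rpower NN (1 / 4)).

Let a := cs / Rr ^ 2.
Let b := cs / Rr.
Let theta := cs ^ 2 / (20 * Rr ^ 3).
Hypothesis Htheta : 2 <= Rpower NN theta.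

Lemma exponents_small : 0 < a <= 1 / 8 /\ 0 < b <= 1 / 8 /\ theta = a * (b / 20).
Proof.
  assert (HR2 : 1 <= Rr ^ 2) by nra.
  unfold a, b, theta. split; [|split].
  - split; [apply Rdiv_lt_0_compat; lra|].
    apply Rle_trans with (cs / 1); [apply Rmult_le_compat_l; [lra|apply Rinv_le_contravar]|]; lra.
  - split; [apply Rdiv_lt_0_compat; lra|].
    apply Rle_trans with (cs / 1); [apply Rmult_le_compat_l; [lra|apply Rinv_le_contravar]|]; lra.
  - field. lra.
Qed.

Lemma U_ge1 : 1 <= U.
Proof.
  destruct exponents_small as [Ha _].
  apply Rle_trans with (Rpower NN a); [apply Rpower_ge1|]; auto; lra.
Qed.

Lemma Rpower_theta_le : Rpower NN theta <= Rpower U (b / 20).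
Proof.
  destruct exponents_small as (Ha & Hb & ->).
  rewrite <- Rpower_mult. apply Rle_Rpower_l; [lra|]. split; [apply Rpower_pos | exact HU1].
Qed.

Lemma qU_le : 8 * q * U * Rpower NN theta <= NN.
Proof.
  destruct exponents_small as (Ha & Hb & Hth).
  set (Zt := Rpower NN theta) in *.
  assert (Hth0 : 0 < theta) by (rewrite Hth; nra).
  assert (HZ4 : 16 <= Rpower NN (INR 4 * theta)).
  { rewrite Rpower_nat_mult. fold Zt. replace 16 with (2 ^ 4) by ring.
    apply pow_incr. lra. }
  assert (HqUZ : q * U * Zt <= 2 * Rpower NN (1 / 4 + a + theta)).
  { rewrite !Rpower_plus. fold Zt.
    assert (q * U <= Rpower NN (1 / 4) * (2 * Rpower NN a))
      by (apply Rmult_le_compat; auto; apply Rle_trans with 1; [lra|apply U_ge1]).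
    assert (0 < Zt) by apply Rpower_pos. nra. }
  assert (Hexp : Rpower NN (INR 4 * theta) * Rpower NN (1 / 4 + a + theta) <= NN).
  { rewrite <- Rpower_plus. rewrite <- (Rpower_1 NN) at 2 by lra.
    apply Rle_Rpower; [lra|]. simpl INR. assert (a * b <= 1 / 64) by nra. nra. }
  assert (0 < Rpower NN (1 / 4 + a + theta)) by apply Rpower_pos.
  nra.
Qed.

Lemma rhoV_le : 32 * Rpower U (1 / 4) * V * Rpower NN theta <= U.
Proof.
  destruct exponents_small as (Ha & Hb & Hth).
  assert (HU := U_ge1).
  assert (HZY := Rpower_theta_le).
  set (Y := Rpower U (b / 20)) in *.
  assert (HY6 : 64 <= Rpower U (INR 6 * (b / 20))).
  { rewrite Rpower_nat_mult. fold Y. replace 64 with (2 ^ 6) by ring. apply pow_incr. lra. }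
  assert (HVY : Rpower U (1 / 4) * V * Rpower NN theta <= 2 * Rpower U (1 / 4 + b + b / 20)).
  { rewrite !Rpower_plus. fold Y.
    assert (0 < Rpower U (1 / 4)) by apply Rpower_pos.
    assert (0 < Rpower NN theta) by apply Rpower_pos.
    assert (0 < V) by (apply Rlt_le_trans with (Rpower U b); [apply Rpower_pos | exact HV1]).
    assert (V * Rpower NN theta <= 2 * Rpower U b * Y)
      by (apply Rmult_le_compat; [lra | lra | exact HV2 | exact HZY]).
    nra. }
  assert (Hexp : Rpower U (INR 6 * (b / 20)) * Rpower U (1 / 4 + b + b / 20) <= U).
  { rewrite <- Rpower_plus. rewrite <- (Rpower_1 U) at 2 by lra.
    apply Rle_Rpower; [lra|]. simpl INR. lra. }
  assert (0 < Rpower U (1 / 4 + b + b / 20)) by apply Rpower_pos.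
  nra.
Qed.

Lemma mean_error_le w : 2 <= Rpower NN theta * w ->
  q * U + (NN + q * U) * (2 * Rpower U (1 / 4) * V) / U <= w * NN / 8.
Proof.
  intros Hw.
  assert (HU := U_ge1). assert (H1 := qU_le). assert (H2 := rhoV_le).
  set (Zt := Rpower NN theta) in *.
  assert (HZ0 : 0 < Zt) by apply Rpower_pos.
  set (e := 2 * Rpower U (1 / 4) * V / U).
  assert (He0 : 0 <= e).
  { unfold e. apply Rmult_le_pos; [|left; apply Rinv_0_lt_compat; lra].
    assert (0 < Rpower U (1 / 4)) by apply Rpower_pos.
    assert (0 < V) by (apply Rlt_le_trans with (Rpower U b); [apply Rpower_pos | exact HV1]).
    nra. }
  assert (He : 16 * Zt * e <= 1).
  { unfold e. apply Rmult_le_reg_r with U; [lra|].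
    replace (16 * Zt * (2 * Rpower U (1 / 4) * V / U) * U)
      with (32 * Rpower U (1 / 4) * V * Zt) by (field; lra). lra. }
  replace ((NN + q * U) * (2 * Rpower U (1 / 4) * V) / U) with ((NN + q * U) * e) by (unfold e; field; lra).
  assert (HqU0 : 0 <= q * U) by nra.
  apply Rmult_le_reg_r with (8 * Zt); [lra|].
  assert (8 * Zt * (q * U) <= NN) by lra.
  assert (8 * Zt * ((NN + q * U) * e) <= NN) by nra.
  nra.
Qed.

Lemma V_ge w : 2 <= Rpower NN theta * w ->
  Rpower NN (cs ^ 2 / 2 / Rr ^ 3) <= V * w / 2.
Proof.
  intros Hw.
  destruct exponents_small as (Ha & Hb & Hth).
  set (Zt := Rpower NN theta) in *.
  assert (HZ0 : 0 < Zt) by apply Rpower_pos.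
  assert (HV : Rpower NN (INR 20 * theta) <= V).
  { apply Rle_trans with (Rpower U b); [|exact HV1].
    replace (INR 20 * theta) with (a * b) by (rewrite Hth; simpl; field).
    rewrite <- Rpower_mult. apply Rle_Rpower_l; [lra|]. split; [apply Rpower_pos | exact HU1]. }
  replace (cs ^ 2 / 2 / Rr ^ 3) with (INR 10 * theta) by (unfold theta; simpl; field; lra).
  rewrite Rpower_nat_mult in HV |- *. fold Zt in HV |- *.
  assert (HZ10 : 1 <= Zt ^ 10) by (apply pow_R1_Rle; lra).
  replace (Zt ^ 20) with (Zt ^ 10 * Zt ^ 9 * Zt) in HV by ring.
  assert (HZ9 : 1 <= Zt ^ 9) by (apply pow_R1_Rle; lra).
  assert (Hw0 : 0 < w) by nra.
  apply Rle_trans with (Zt ^ 10 * Zt ^ 9 * (Zt * w / 2)).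
  - rewrite <- (Rmult_1_r (Zt ^ 10)) at 1. rewrite Rmult_assoc.
    apply Rmult_le_compat_l; nra.
  - replace (V * w / 2) with (V * (w / 2)) by field.
    replace (Zt ^ 10 * Zt ^ 9 * (Zt * w / 2)) with (Zt ^ 10 * Zt ^ 9 * Zt * (w / 2)) by field.
    apply Rmult_le_compat_r; lra.
Qed.

End ParameterBounds.

Lemma Rpower_threshold_weight cs Rr NN ed w : 0 < cs -> 1 <= Rr -> 0 < ed <= w ->
  NN >= Rpower (2 / ed) (20 / cs ^ 2 * Rr ^ 3) ->
  2 <= Rpower NN (cs ^ 2 / (20 * Rr ^ 3)) * w.
Proof.
  intros Hcs HRr Hw HNN.
  assert (Hthr : 2 / ed <= Rpower NN (cs ^ 2 / (20 * Rr ^ 3))).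
  { apply Rpower_inv_exponent_le; [apply Rdiv_lt_0_compat; nra | apply Rdiv_lt_0_compat; lra |].
    replace (/ (cs ^ 2 / (20 * Rr ^ 3))) with (20 / cs ^ 2 * Rr ^ 3) by (field; nra).
    apply Rge_le, HNN. }
  apply Rmult_le_compat_r with (r := w) in Hthr; [|lra].
  apply Rle_trans with (2 := Hthr).
  replace (2 / ed * w) with (2 * (w / ed)) by (field; lra).
  assert (1 <= w / ed) by (apply Rmult_le_reg_r with ed; [lra|]; field_simplify; lra).
  lra.
Qed.

Lemma inN_true N n : (1 <= n <= Z.of_nat N)%Z -> inN N n = true.
Proof. intros Hn. unfold inN. apply Bool.andb_true_iff. split; apply Z.leb_le; lia. Qed.

Lemma balanced_bounds A N delta z : 0 <= delta <= 1 ->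
  - delta <= balanced A N delta z <= 1 - delta.
Proof. intros Hd. unfold balanced, indR. destruct (inN N z); [destruct (A z)|]; lra. Qed.

Lemma balanced_supported A N delta z : (z < 1 \/ Z.of_nat N < z)%Z -> balanced A N delta z = 0.
Proof.
  intros Hz. unfold balanced, inN.
  destruct ((1 <=? z)%Z && (z <=? Z.of_nat N)%Z)%bool eqn:E; [|reflexivity].
  apply Bool.andb_true_iff in E. destruct E as [E1 E2].
  apply Z.leb_le in E1. apply Z.leb_le in E2. lia.
Qed.

Lemma balanced_mean0 A N delta : (1 <= N)%nat -> delta = cardA A N / INR N ->
  zsum 0 N (balanced A N delta) = 0.
Proof.
  intros HN Hdelta. assert (0 < INR N) by (apply lt_0_INR; lia).
  unfold zsum. rewrite (rsum_ext _ _ (fun j => indR (A (Z.of_nat j)) - delta)).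
  - rewrite rsum_minus, rsum_const. fold (cardA A N). rewrite Hdelta. field. lra.
  - intros j Hj. unfold balanced. rewrite inN_true by lia. reflexivity.
Qed.

Lemma balanced_smoothing_sum_le A N delta q U V r rho :
  (1 <= N)%nat -> (1 <= U)%nat -> (1 <= V)%nat -> 0 <= delta <= 1 ->
  delta = cardA A N / INR N -> (forall z, INR (r z) <= rho) ->
  Rabs (rsum N (fun j => smoothing q U V r (balanced A N delta) (Z.of_nat j))) <=
    INR q * INR U + (INR N + INR q * INR U) * (2 * rho * INR V) / INR U.
Proof.
  intros HN HU HV Hd Hdelta Hr. apply smoothing_sum_le; auto.
  - intros z. apply Rabs_le. assert (H := balanced_bounds A N delta z Hd). lra.
  - apply balanced_supported.
  - apply balanced_mean0; auto.
Qed.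

Lemma L2norm_div_sq_ge N g delta nu : (1 <= N)%nat -> 0 < delta ->
  L2norm N (fun n => g n / delta) ^ 2 >= nu ->
  nu * delta ^ 2 * INR N <= rsum N (fun j => g (Z.of_nat j) ^ 2).
Proof.
  intros HN Hd HL2. assert (HN0 : 0 < INR N) by (apply lt_0_INR; lia).
  assert (HS : 0 <= rsum N (fun j => g (Z.of_nat j) ^ 2)).
  { rewrite <- (Rmult_0_r (INR N)), <- rsum_const. apply rsum_le. intros; apply pow2_ge_0. }
  unfold L2norm in HL2.
  rewrite (rsum_ext _ _ (fun j => / delta ^ 2 * g (Z.of_nat j) ^ 2)) in HL2
    by (intros j _; rewrite pow2_abs; field; lra).
  rewrite rsum_scal in HL2.
  set (S := rsum N (fun j => g (Z.of_nat j) ^ 2)) in *.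
  assert (Hd2 : 0 < delta ^ 2) by (apply pow_lt; lra).
  rewrite pow2_sqrt in HL2.
  - replace (1 / INR N * (/ delta ^ 2 * S)) with (S / (delta ^ 2 * INR N)) in HL2 by (field; lra).
    assert (HdN : 0 < delta ^ 2 * INR N) by (apply Rmult_lt_0_compat; lra).
    apply Rge_le, Rmult_le_compat_r with (r := delta ^ 2 * INR N) in HL2; [|lra].
    unfold Rdiv in HL2. rewrite Rmult_assoc, Rinv_l, Rmult_1_r in HL2 by lra. lra.
  - apply Rmult_le_pos; [apply Rlt_le, Rdiv_lt_0_compat; lra|].
    apply Rmult_le_pos; [apply Rlt_le, Rinv_0_lt_compat|]; lra.
Qed.

(* If [g] stayed below [K = min (nu delta / 2) 1] on [1, N], then
   [(g + delta) (g - K) <= 0] would bound its second moment by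
   [K delta N + (K - delta) sum g], which is less than [nu delta^2 N]. *)
Lemma large_value_exists N (g : nat -> R) delta nu : (1 <= N)%nat -> 0 < delta <= 1 -> 0 < nu ->
  (forall j, (1 <= j <= N)%nat -> - delta <= g j <= 1 - delta) ->
  Rabs (rsum N g) <= nu * delta ^ 2 * INR N / 8 ->
  nu * delta ^ 2 * INR N <= rsum N (fun j => g j ^ 2) ->
  exists j, (1 <= j <= N)%nat /\ nu * delta / 2 <= g j.
Proof.
  intros HN Hd Hnu Hg Hmean Hsq. apply NNPP. intros Hnone.
  assert (HN0 : 0 < INR N) by (apply lt_0_INR; lia).
  set (K := Rmin (nu * delta / 2) 1).
  assert (HK : 0 < K <= nu * delta / 2 /\ K <= 1).
  { unfold K. split; [split|]; [apply Rmin_glb_lt; nra | apply Rmin_l | apply Rmin_r]. }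
  assert (Hpt : forall j, (1 <= j <= N)%nat -> g j ^ 2 <= K * delta + (K - delta) * g j).
  { intros j Hj.
    assert (g j < nu * delta / 2) by (apply Rnot_le_lt; intros Hle; apply Hnone; eauto).
    assert (g j <= K) by (unfold K; apply Rmin_glb; [lra|]; specialize (Hg j Hj); lra).
    specialize (Hg j Hj). nra. }
  apply rsum_le in Hpt. rewrite rsum_plus, rsum_const, rsum_scal in Hpt.
  assert ((K - delta) * rsum N g <= Rabs (rsum N g)).
  { eapply Rle_trans; [apply Rle_abs|]. rewrite Rabs_mult.
    rewrite <- (Rmult_1_l (Rabs (rsum N g))) at 2.
    apply Rmult_le_compat_r; [apply Rabs_pos|]. apply Rabs_le. lra. }
  assert (INR N * (K * delta) <= INR N * (nu * delta / 2 * delta))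
    by (apply Rmult_le_compat_l; [lra|]; apply Rmult_le_compat_r; lra).
  assert (0 < nu * delta ^ 2 * INR N) by (apply Rmult_lt_0_compat; [|lra]; apply Rmult_lt_0_compat; nra).
  nra.
Qed.

(* The progression [n0 + d j] is truncated at the last [j <= V] with [n0 + d j <= N];
   beyond it [balanced] vanishes, so the whole excess [V t] sits on the truncation. *)
Lemma progression_increment A N delta (n0 : Z) d V t : (0 <= n0)%Z -> (1 <= d)%nat ->
  (1 <= V)%nat -> 0 <= delta -> 0 < t ->
  INR V * t <= rsum V (fun j => balanced A N delta (n0 + Z.of_nat (d * j))%Z) ->
  exists L, (1 <= L)%nat /\
    (forall j, (1 <= j <= L)%nat -> (1 <= n0 + Z.of_nat d * Z.of_nat j <= Z.of_nat N)%Z) /\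
    INR V * t <= INR L /\
    delta + t <= rsum L (fun j => indR (A (n0 + Z.of_nat d * Z.of_nat j)%Z)) / INR L.
Proof.
  intros Hn0 Hd HV Hdelta Ht Hsum.
  set (s := ((Z.of_nat N - n0) / Z.of_nat d)%Z).
  assert (Hs1 : (Z.of_nat d * s <= Z.of_nat N - n0)%Z) by (apply Z.mul_div_le; lia).
  assert (Hs2 : (Z.of_nat N - n0 < Z.of_nat d * Z.succ s)%Z) by (apply Z.mul_succ_div_gt; lia).
  set (L := Nat.min V (Z.to_nat s)).
  assert (Hin : forall j, (1 <= j <= L)%nat -> (1 <= n0 + Z.of_nat d * Z.of_nat j <= Z.of_nat N)%Z).
  { intros j Hj. assert (Z.of_nat d * Z.of_nat j <= Z.of_nat d * s)%Z
      by (apply Z.mul_le_mono_nonneg_l; lia). nia. }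
  assert (Hout : forall j, (L < j <= V)%nat -> (Z.of_nat N < n0 + Z.of_nat d * Z.of_nat j)%Z).
  { intros j Hj. assert (Z.of_nat d * Z.succ s <= Z.of_nat d * Z.of_nat j)%Z
      by (apply Z.mul_le_mono_nonneg_l; lia). lia. }
  set (S := rsum L (fun j => indR (A (n0 + Z.of_nat d * Z.of_nat j)%Z))).
  assert (HS : rsum V (fun j => balanced A N delta (n0 + Z.of_nat (d * j))%Z) = S - INR L * delta).
  { replace V with (L + (V - L))%nat at 1 by lia. rewrite rsum_add_range.
    rewrite (rsum_ext (V - L) _ (fun _ => 0))
      by (intros j Hj; apply balanced_supported; right; rewrite Nat2Z.inj_mul; apply Hout; lia).
    rewrite rsum_const, Rmult_0_r, Rplus_0_r.
    unfold S. rewrite <- rsum_const, <- rsum_minus.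
    apply rsum_ext. intros j Hj. unfold balanced.
    rewrite Nat2Z.inj_mul, inN_true by (apply Hin, Hj). reflexivity. }
  assert (HSL : S <= INR L).
  { rewrite <- (Rmult_1_r (INR L)), <- rsum_const. apply rsum_le.
    intros; unfold indR; destruct (A _); lra. }
  assert (HLV : INR L <= INR V) by (apply le_INR; lia).
  assert (HV0 : 0 < INR V) by (apply lt_0_INR; lia).
  assert (HL0 := pos_INR L).
  rewrite HS in Hsum.
  assert (HVt : INR V * t <= INR L) by nra.
  assert (HL : (1 <= L)%nat).
  { destruct L; [|lia]. simpl in HVt. nra. }
  assert (HLpos : 0 < INR L) by (apply lt_0_INR; lia).
  exists L. split; [exact HL|]. split; [exact Hin|]. split; [exact HVt|].
  fold S. apply Rmult_le_reg_r with (INR L); [lra|].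
  replace (S / INR L * INR L) with S by (field; lra).
  assert (INR L * t <= INR V * t) by (apply Rmult_le_compat_r; lra).
  nra.
Qed.

Theorem proposition9p6 :
  forall (lam : list Z), Forall (fun l => l <> 0%Z) lam ->
  forall cstar : R, 0 < cstar <= 1 / 8 ->
  exists C c c' : R, 0 < C /\ 0 < c /\ 0 < c' /\
  forall (N : nat) (M : Z) (eps delta nu : R) (Rn : nat)
         (x y : nat -> Z) (A : Z -> bool)
         (q U V : nat) (r : Z -> nat),
    (1 <= N)%nat ->
    prime M ->
    (2 * sum_absZ lam * Z.of_nat N <= M <= 2 * (2 * sum_absZ lam * Z.of_nat N))%Z ->
    0 < eps <= 1 -> 0 < delta <= 1 -> 0 < nu -> (1 <= Rn)%nat ->
    (forall i : nat, (1 <= i <= Rn)%nat ->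
       (0 <= x i < M)%Z /\ (0 <= y i < M ^ 2)%Z) ->
    INR N >= Rpower (2 / (eps * delta)) (C * INR Rn ^ 3) ->
    linearization_system cstar eps delta Rn N
      (fun i => phase M (x i) (y i)) q U V r ->
    (forall n : Z, A n = true -> (1 <= n <= Z.of_nat N)%Z) ->
    delta = cardA A N / INR N ->
    (L2norm N (fun n => smoothing q U V r (balanced A N delta) n / delta)) ^ 2 >= nu ->
    eps <= c * nu * delta ->
    exists (u : Z) (d : nat) (L : nat),
      (1 <= d)%nat /\ (1 <= L)%nat /\
      (forall j : nat, (1 <= j <= L)%nat ->
         (1 <= u + Z.of_nat d * Z.of_nat j <= Z.of_nat N)%Z) /\
      rsum L (fun j => indR (A (u + Z.of_nat d * Z.of_nat j)%Z)) / INR L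
        >= (1 + nu / 2) * delta /\
      INR L >= Rpower (INR N) (c' / INR Rn ^ 3).
Proof.
  intros lam _ cs Hcs.
  exists (20 / cs ^ 2), 1, (cs ^ 2 / 2).
  split; [apply Rdiv_lt_0_compat; nra|]. split; [lra|]. split; [nra|].
  intros N M eps delta nu Rn x y A q U V r HN _ _ He Hd Hnu HRn _ HNb Hlin _ Hdelta HL2 Hen.
  destruct Hlin as (Hq & HU & HV & Hr1 & HU1 & HU2 & HV1 & HV2 & Hq2 & Hr2 & _).
  assert (HRr : 1 <= INR Rn) by (apply (le_INR 1); lia).
  assert (HNr : 1 <= INR N) by (apply (le_INR 1); lia).
  assert (Hed : 0 < eps * delta) by nra.
  assert (Hweight : forall w, eps * delta <= w -> 2 <= Rpower (INR N) (cs ^ 2 / (20 * INR Rn ^ 3)) * w)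
    by (intros w Hw; apply (Rpower_threshold_weight _ _ _ (eps * delta)); auto; lra).
  assert (Htheta : 2 <= Rpower (INR N) (cs ^ 2 / (20 * INR Rn ^ 3)))
    by (rewrite <- (Rmult_1_r (Rpower _ _)); apply Hweight; nra).
  set (g := smoothing q U V r (balanced A N delta)).
  assert (Hmean : Rabs (rsum N (fun j => g (Z.of_nat j))) <= nu * delta ^ 2 * INR N / 8).
  { eapply Rle_trans; [apply balanced_smoothing_sum_le with (rho := Rpower (INR U) (1 / 4)); auto; lra|].
    apply (mean_error_le cs (INR Rn)); auto using pos_INR. apply Hweight. nra. }
  assert (Hsq := L2norm_div_sq_ge N g delta nu HN (proj1 Hd) HL2).
  destruct (large_value_exists N (fun j => g (Z.of_nat j)) delta nu) as [n0 [Hn0 Hg0]]; auto.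
  { intros j _. apply smoothing_bounds; auto. intros z. apply balanced_bounds. lra. }
  destruct (smoothing_ge_exists q U V r (balanced A N delta) (Z.of_nat n0) (nu * delta / 2))
    as [jm [Hjm Hsum]]; auto.
  set (d := (q * r (Z.of_nat n0 - Z.of_nat (q * jm))%Z)%nat) in Hsum.
  assert (Hd1 : (1 <= d)%nat)
    by (unfold d; specialize (Hr1 (Z.of_nat n0 - Z.of_nat (q * jm))%Z); nia).
  destruct (progression_increment A N delta (Z.of_nat n0) d V (nu * delta / 2))
    as [L (HL & HLin & HLV & HLdens)]; try lia; try nra.
  exists (Z.of_nat n0), d, L. do 3 (split; [assumption|]). split; apply Rle_ge.
  - lra.
  - eapply Rle_trans; [|exact HLV].
    replace (INR V * (nu * delta / 2)) with (INR V * (nu * delta) / 2) by field.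
    apply (V_ge cs (INR Rn) (INR N) (INR U) (INR V)); auto. apply Hweight. nra.
Qed.
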